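(* In the setting described in the context, $\sum_{i=1}^{m-1} L_1(\overline{p}_i,\overline{q}_i)\le 4\cdot L_1(p_1',t)$, where $p_1'$ is the vertical projection of $p_1$ onto $\ell_t^-$ and $L_1$ denotes the $L_1$ distance.
   Context: $P$ is a finite set of points in the plane, $s,t\in P$ distinct, and coordinates are chosen so that $t=(0,0)$ and $s$ lies in $C_2^t$ below the line $\ell_t^-=\{x+y=0\}$. Cones: $C_0^v=\{x\ge v_x,y\le v_y\}$, $C_1^v=\{x\ge v_x,y\ge v_y\}$, $C_2^v=\{x\le v_x,y\ge v_y\}$, $C_3^v=\{x\le v_x,y\le v_y\}$ with bisector directions $(1,-1),(1,1),(-1,1),(-1,-1)$. The $\Theta_4$-graph of $P$ has, for each $v\in P$ and cone $C_i^v$ containing a point of $P\setminus\{v\}$, a directed edge from $v$ to a point $w$ of $(P\setminus\{v\})\cap C_i^v$ minimizing the projection of $w-v$ onto the bisector direction (the neighbour of $v$ in $C_i^v$). For a point $p$, $\ell_p^+$ is the line through $p$ of slope $+1$, and $\overline{p}$ denotes the intersection point of $\ell_t^-$ and $\ell_p^+$. Algorithm: for a vertex $v$, let $T(v,\ell_t^-)=C_1^v\cap\{x+y\le0\}$ if $v_x+v_y<0$, $T(v,\ell_t^-)=C_3^v\cap\{x+y\ge0\}$ if $v_x+v_y>0$, and $\{v\}$ if $v_x+v_y=0$; $v$ is clean if $T(v,\ell_t^-)$ contains no point of $P$ other than $v$. Starting at $v=s$, while $v\ne t$: if $v$ is not clean, take a sweeping step (go to the neighbour of $v$ in $C_1^v$,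 resp. $C_3^v$); otherwise take a greedy step (go to the neighbour of $v$ in the cone $C_i^v$ containing $t$). Let $(p_1,q_1),\dots,(p_{m-1},q_{m-1})$ be, in order, the edges traversed by greedy steps, and set $p_m=t$. *)

From HB Require Import structures.
From mathcomp Require Import all_boot all_order all_algebra.
Set Implicit Arguments. Unset Strict Implicit. Unset Printing Implicit Defensive.
Import Order.TTheory GRing.Theory Num.Theory.
Local Open Scope ring_scope.

Section Theta4.
Variable R : realFieldType.
Notation pt := (R * R)%type.

Definition L1 (a b : pt) : R := `|a.1 - b.1| + `|a.2 - b.2|.

Definition inC (i : nat) (v w : pt) : bool :=
  match i with
  | 0%N => (v.1 <= w.1) && (w.2 <= v.2)
  | 1%N => (v.1 <= w.1) && (v.2 <= w.2)
  | 2%N => (w.1 <= v.1) && (v.2 <= w.2)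
  | _ => (w.1 <= v.1) && (w.2 <= v.2)
  end.

(* projection of w - v onto the bisector direction of C_i
   (directions (1,-1),(1,1),(-1,1),(-1,-1), unnormalised: same minimisers) *)
Definition bproj (i : nat) (v w : pt) : R :=
  match i with
  | 0%N => (w.1 - v.1) - (w.2 - v.2)
  | 1%N => (w.1 - v.1) + (w.2 - v.2)
  | 2%N => - (w.1 - v.1) + (w.2 - v.2)
  | _ => - (w.1 - v.1) - (w.2 - v.2)
  end.

Definition is_nb (P : seq pt) (v : pt) (i : nat) (w : pt) : Prop :=
  [/\ w \in P, w != v, inC i v w &
      forall u, u \in P -> u != v -> inC i v u -> bproj i v w <= bproj i v u].

Definition theta4_graph (P : seq pt) (nb : pt -> nat -> pt) : Prop :=
  forall v i, v \in P -> (i < 4)%N ->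
    (exists u, [/\ u \in P, u != v & inC i v u]) -> is_nb P v i (nb v i).

(* T(v, l_t^-) with t = (0,0) and l_t^- = {x + y = 0} *)
Definition inT (v w : pt) : bool :=
  if v.1 + v.2 < 0 then [&& v.1 <= w.1, v.2 <= w.2 & w.1 + w.2 <= 0]
  else if 0 < v.1 + v.2 then [&& w.1 <= v.1, w.2 <= v.2 & 0 <= w.1 + w.2]
  else w == v.

Definition clean (P : seq pt) (v : pt) : bool :=
  all (fun w => inT v w ==> (w == v)) P.

Definition sweep_cone (v : pt) : nat := if v.1 + v.2 < 0 then 1%N else 3%N.

Definition alg_step (P : seq pt) (nb : pt -> nat -> pt) (t v w : pt) : Prop :=
  if ~~ clean P v then w = nb v (sweep_cone v)
  else exists2 i, (i < 4)%N /\ inC i v t & w = nb v i.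

(* \overline{p}: intersection of l_t^- = {x+y=0} and l_p^+ (slope +1 through p) *)
Definition bar (p : pt) : pt := ((p.1 - p.2) / 2, (p.2 - p.1) / 2).

Definition vproj (p : pt) : pt := (p.1, - p.1).

End Theta4.

(* Put [bar_coord p = p.1 - p.2]; then [bar p] is the point of l_t^- with
   abscissa [bar_coord p / 2], and
   [L1 (bar p) (bar q) = |bar_coord p - bar_coord q|].
   A greedy step from a clean vertex p moves [bar_coord] towards 0 without
   crossing it, so it contributes [|bar_coord p| - |bar_coord p'|] for its
   successor p'.  No step leaves a square centred at t, and a clean vertex has
   an empty triangle T(p, l_t^-); together these put every later vertex on the
   same side of l_t^- into the greedy cone of p, so minimality of the greedy
   neighbour makes the contributions of the clean vertices of one side and one
   greedy cone disjoint subintervals of [0, 2r], where [r = -p_1.x] is the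
   half-width of the square through the first clean vertex p_1.  The four
   classes give [8r = 4 L1(p_1', t)]. *)

From HB Require Import structures.
From mathcomp Require Import all_boot all_order all_algebra.
From mathcomp Require Import ring lra zify.
Import Order.TTheory GRing.Theory Num.Theory.
Local Open Scope ring_scope.

Lemma sum_decreasing_intervals_le (R : realDomainType) (Q : pred nat)
    (lo hi : nat -> R) (L U : R) (n : nat) :
  L <= U ->
  (forall j, (j < n)%N -> Q j -> L <= lo j /\ hi j <= U) ->
  (forall i j, (i < j < n)%N -> Q i -> Q j -> hi j <= lo i) ->
  \sum_(j < n | Q j) (hi j - lo j) <= U - L.
Proof.
elim: n L => [|n IHn] L LU bounds disj; first by rewrite big_ord0 subr_ge0.
rewrite big_mkcond big_ord_recr /= -big_mkcond /=.
have IH L' : L' <= U -> (forall j, (j < n)%N -> Q j -> L' <= lo j) ->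
    \sum_(j < n | Q j) (hi j - lo j) <= U - L'.
  move=> L'U L'lo; apply: IHn => // [j jn Qj | i j /andP[ij jn] Qi Qj].
    by split; [apply: L'lo | case: (bounds j (ltnW jn) Qj)].
  by apply: disj; rewrite // ij ltnW.
case: ifP => Qn; last first.
  rewrite addr0; apply: IH => // j jn Qj.
  by case: (bounds j (ltnW jn) Qj).
have [Llo hiU] := bounds n (ltnSn n) Qn.
have : \sum_(j < n | Q j) (hi j - lo j) <= U - hi n.
  by apply: IH => // j jn Qj; apply: disj; rewrite ?jn ?ltnSn.
lra.
Qed.

Lemma normrB_between (R : realDomainType) (x y : R) :
  (x <= y <= 0) || (0 <= y <= x) -> `|x - y| = `|x| - `|y|.
Proof.
case/orP=> /andP[xy y0].
  by rewrite !ler0_norm ?subr_le0 ?(le_trans xy) //; lra.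
by rewrite !ger0_norm ?subr_ge0 ?(le_trans y0) //; lra.
Qed.

Section Routing.
Set Implicit Arguments. Unset Strict Implicit.
Variable R : realFieldType.
Variables (P : seq (R * R)) (nb : R * R -> nat -> R * R).
Notation t := ((0, 0) : R * R).
Hypothesis tP : t \in P.
Hypothesis graphP : theta4_graph P nb.

Definition bar_coord (p : R * R) : R := p.1 - p.2.

Definition below (p : R * R) : bool := p.1 + p.2 <= 0.

Definition greedy_cone (p : R * R) : nat := if inC 0 p t then 0 else 2.

Definition next_vertex (p : R * R) : R * R :=
  nb p (if clean P p then greedy_cone p else sweep_cone p).

Definition in_square (r : R) (p : R * R) : bool :=
  (- r <= p.1 <= r) && (- r <= p.2 <= r).

Lemma L1_bar (p q : R * R) : L1 (bar p) (bar q) = `|bar_coord p - bar_coord q|.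
Proof.
rewrite /L1 /bar /bar_coord /=; set x := p.1 - p.2 - (q.1 - q.2).
have -> : (p.1 - p.2) / 2 - (q.1 - q.2) / 2 = x / 2 by rewrite /x; field.
have -> : (p.2 - p.1) / 2 - (q.2 - q.1) / 2 = - (x / 2) by rewrite /x; field.
rewrite normrN normrM normfV normr_nat; lra.
Qed.

Lemma neq_t (p : R * R) : (p != t) = (p.1 != 0) || (p.2 != 0).
Proof. by case: p => x y; rewrite xpair_eqE negb_and. Qed.

Lemma clean_T_empty p q : clean P p -> q \in P -> q != p ->
  (p.1 + p.2 < 0 -> ~~ [&& p.1 <= q.1, p.2 <= q.2 & q.1 + q.2 <= 0]) /\
  (0 < p.1 + p.2 -> ~~ [&& q.1 <= p.1, q.2 <= p.2 & 0 <= q.1 + q.2]).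
Proof.
move=> /allP cp qP qp; have := cp q qP; rewrite (negbTE qp) implybF /inT.
by case: ltrgtP.
Qed.

Lemma clean_greedy_cone_t p : clean P p -> p != t -> inC (greedy_cone p) p t.
Proof.
move=> cp pt; have tp : t != p by rewrite eq_sym.
have [lo up] := clean_T_empty cp tP tp; rewrite neq_t in pt.
rewrite /greedy_cone /inC /= in lo up *; case: ifP => //= C0; lra.
Qed.

Lemma clean_cone_t_greedy p i : clean P p -> p != t ->
  (i < 4)%N -> inC i p t -> i = greedy_cone p.
Proof.
move=> cp pt i4; have tp : t != p by rewrite eq_sym.
have [lo up] := clean_T_empty cp tP tp; rewrite neq_t in pt.
rewrite /greedy_cone /inC /= in lo up *; case: i i4 => [|[|[|[|]]]] //= _ it.
all: by case: ifP => C0 //; exfalso; lra.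
Qed.

Lemma alg_step_next_vertex p w : p != t -> alg_step P nb t p w -> w = next_vertex p.
Proof.
rewrite /alg_step /next_vertex => pt; case: ifP => [/negbTE -> //|/negbFE cp].
by case=> i [i4 it] ->; rewrite cp -(clean_cone_t_greedy cp pt i4 it).
Qed.

Lemma greedy_next_vertex_nb p : p \in P -> clean P p -> p != t ->
  is_nb P p (greedy_cone p) (next_vertex p).
Proof.
move=> pP cp pt; rewrite /next_vertex cp; apply: graphP => //.
  by rewrite /greedy_cone; case: ifP.
by exists t; rewrite tP eq_sym pt clean_greedy_cone_t.
Qed.

Lemma sweep_next_vertex p : p \in P -> ~~ clean P p ->
  next_vertex p \in P /\ inT p (next_vertex p).
Proof.
move=> pP ncp; have /allPn[u uP] := ncp; rewrite negb_imply => /andP[uT up].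
have uC : inC (sweep_cone p) p u.
  move: uT up; rewrite /inT /sweep_cone /inC.
  by case: ltrgtP => _ /=; [lra | lra | move=> ->].
have s4 : (sweep_cone p < 4)%N by rewrite /sweep_cone; case: ifP.
have [wP _ wC wmin] := graphP pP s4 (ex_intro _ u (And3 uP up uC)).
split; first by rewrite /next_vertex (negbTE ncp).
have := wmin u uP up uC; move: uT up wC; rewrite /next_vertex (negbTE ncp).
rewrite /inT /sweep_cone /inC /bproj.
by case: ltrgtP => _ /=; [lra | lra | move=> ->].
Qed.

Lemma next_vertex_in_P p : p \in P -> p != t -> next_vertex p \in P.
Proof.
move=> pP pt; case: (boolP (clean P p)) => cp.
  by case: (greedy_next_vertex_nb pP cp pt).
by case: (sweep_next_vertex pP cp).
Qed.

Lemma in_square_next_vertex p r : p \in P -> p != t ->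
  in_square r p -> in_square r (next_vertex p).
Proof.
move=> pP pt; rewrite /in_square; case: (boolP (clean P p)) => cp.
  have [_ _ wC wmin] := greedy_next_vertex_nb pP cp pt.
  have tp : t != p by rewrite eq_sym.
  have := wmin t tP tp (clean_greedy_cone_t cp pt).
  by move: wC; rewrite /greedy_cone /inC /bproj; case: ifP => _ /=; lra.
have [_] := sweep_next_vertex pP cp; rewrite /inT.
by case: ltrgtP => _ /=; [lra | lra | move=> /eqP ->].
Qed.

Lemma greedy_bar_coord_between p : p \in P -> clean P p -> p != t ->
  (bar_coord p <= bar_coord (next_vertex p) <= 0) ||
  (0 <= bar_coord (next_vertex p) <= bar_coord p).
Proof.
move=> pP cp pt; have [_ _ wC wmin] := greedy_next_vertex_nb pP cp pt.
have tp : t != p by rewrite eq_sym.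
have := wmin t tP tp (clean_greedy_cone_t cp pt).
by move: wC; rewrite /greedy_cone /inC /bproj /bar_coord; case: ifP => _ /=; lra.
Qed.

Lemma L1_bar_greedy p : p \in P -> clean P p -> p != t ->
  L1 (bar p) (bar (next_vertex p)) = `|bar_coord p| - `|bar_coord (next_vertex p)|.
Proof.
by move=> pP cp pt; rewrite L1_bar normrB_between // greedy_bar_coord_between.
Qed.

Lemma greedy_bar_coord_min p q : p \in P -> clean P p -> p != t ->
    q \in P -> q != p -> inC (greedy_cone p) p q -> inC (greedy_cone p) q t ->
  `|bar_coord q| <= `|bar_coord (next_vertex p)|.
Proof.
move=> pP cp pt qP qp qC qt; have [_ _ _ wmin] := greedy_next_vertex_nb pP cp pt.
rewrite -subr_ge0 -normrB_between ?normr_ge0 //.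
have := wmin q qP qp qC; have := greedy_bar_coord_between pP cp pt.
by move: qC qt; rewrite /greedy_cone /inC /bproj /bar_coord; case: ifP => _ /=; lra.
Qed.

Lemma clean_in_greedy_cone p q : clean P p -> p != t -> q \in P -> q != p ->
    below q = below p -> (forall r, in_square r p -> in_square r q) ->
  inC (greedy_cone p) p q.
Proof.
move=> cp pt qP qp; have [lo up] := clean_T_empty cp qP qp.
have := clean_greedy_cone_t cp pt; rewrite /below /greedy_cone /inC /=.
case: ifP => C0 /= pt0; case: (lerP (p.1 + p.2) 0) => side bq dom.
(* [dom] is used at the half-width of the smallest centred square containing p. *)
- by move: (dom (- p.1)); rewrite /in_square; lra.
- by move: (dom p.2); rewrite /in_square; lra.
- by move: (dom (- p.2)); rewrite /in_square; lra.
- by move: (dom p.1); rewrite /in_square; lra.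
Qed.

Lemma sweep_keeps_lower_left p : p \in P -> ~~ clean P p ->
  inC 2 t p && below p -> inC 2 t (next_vertex p) && below (next_vertex p).
Proof.
move=> pP ncp; have [_] := sweep_next_vertex pP ncp; rewrite /inT /inC /below /=.
by case: ltrgtP => side /=; [lra | lra | move=> /eqP ->; lra].
Qed.

Section Path.
Variables (k : nat) (v : nat -> R * R).
Hypothesis v0P : v 0 \in P.
Hypothesis vk : v k = t.
Hypothesis v_neq_t : forall j, (j < k)%N -> v j != t.
Hypothesis v_step : forall j, (j < k)%N -> alg_step P nb t (v j) (v j.+1).

Lemma path_next_vertex j : (j < k)%N -> v j.+1 = next_vertex (v j).
Proof. by move=> jk; apply: alg_step_next_vertex (v_neq_t jk) (v_step jk). Qed.

Lemma path_in_P j : (j <= k)%N -> v j \in P.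
Proof.
elim: j => // j IH jk; rewrite path_next_vertex //.
by apply: next_vertex_in_P; [apply: IH; apply: ltnW | apply: v_neq_t].
Qed.

Lemma path_neq i j : (i < j <= k)%N -> v i != v j.
Proof.
case/andP=> ij jk; apply/negP => /eqP vij.
have shift m : (j + m <= k)%N -> v (i + m) = v (j + m).
  elim: m => [|m IH] jmk; first by rewrite !addn0.
  have jm : (j + m < k)%N by rewrite -addnS.
  have im : (i + m < k)%N by lia.
  by rewrite !addnS !path_next_vertex // IH // ltnW.
have ik : (i + (k - j) < k)%N by lia.
by have := v_neq_t ik; rewrite shift ?subnKC // vk eqxx.
Qed.

Lemma path_in_square i j r : (i <= j <= k)%N ->
  in_square r (v i) -> in_square r (v j).
Proof.
case/andP; elim: j => [|j IH]; first by rewrite leqn0 => /eqP->.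
rewrite leq_eqVlt => /orP[/eqP-> // | ij] jk sq; rewrite path_next_vertex //.
apply: in_square_next_vertex; last exact: IH ij (ltnW jk) sq.
  by apply: path_in_P; apply: ltnW.
exact: v_neq_t.
Qed.

Lemma clean_class_bar_coord_le i j : (i < j < k)%N ->
    clean P (v i) -> clean P (v j) ->
    below (v j) = below (v i) -> greedy_cone (v j) = greedy_cone (v i) ->
  `|bar_coord (v j)| <= `|bar_coord (v i.+1)|.
Proof.
case/andP=> ij jk ci cj bji gji; have ik := ltn_trans ij jk.
have viP := path_in_P (ltnW ik); have vjP := path_in_P (ltnW jk).
have vji : v j != v i by rewrite eq_sym path_neq // ij ltnW.
rewrite path_next_vertex //; apply: greedy_bar_coord_min => //; first exact: v_neq_t.
  apply: clean_in_greedy_cone => //; first exact: v_neq_t.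
  by move=> r; apply: path_in_square; rewrite ltnW // ltnW.
by rewrite -gji; apply: clean_greedy_cone_t => //; apply: v_neq_t.
Qed.

Lemma clean_class_sum_le (Q : pred nat) rr : 0 <= rr ->
    (forall j, (j < k)%N -> Q j -> clean P (v j) && in_square rr (v j)) ->
    (forall i j, (i < j < k)%N -> Q i -> Q j ->
       below (v j) = below (v i) /\ greedy_cone (v j) = greedy_cone (v i)) ->
  \sum_(j < k | Q j) L1 (bar (v j)) (bar (v j.+1)) <= 2 * rr.
Proof.
move=> rr0 Qclean Qclass.
rewrite (eq_bigr (fun j : 'I_k => `|bar_coord (v j)| - `|bar_coord (v j.+1)|));
  last first.
  move=> j Qj; have /andP[cj _] := Qclean j (ltn_ord j) Qj.
  rewrite path_next_vertex // L1_bar_greedy //; last exact: v_neq_t.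
  by apply: path_in_P; apply: ltnW.
rewrite -[2 * rr]subr0.
apply: (@sum_decreasing_intervals_le _ Q (fun j => `|bar_coord (v j.+1)|)
  (fun j => `|bar_coord (v j)|)) => [|j jk Qj|i j ijk Qi Qj].
- lra.
- have /andP[_] := Qclean j jk Qj; rewrite /in_square ler_norml /bar_coord => sq.
  by split; [exact: normr_ge0 | lra].
- have /andP[ci _] := Qclean i (ltn_trans (andP ijk).1 (andP ijk).2) Qi.
  have /andP[cj _] := Qclean j (andP ijk).2 Qj.
  by have [bji gji] := Qclass i j ijk Qi Qj; apply: clean_class_bar_coord_le.
Qed.

(* When no vertex before t is clean, [first_clean = k] and [v first_clean = t]. *)
Definition first_clean : nat := find (fun j => clean P (v j)) (iota 0 k).

Lemma first_clean_le_k : (first_clean <= k)%N.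
Proof. by rewrite (leq_trans (find_size _ _)) ?size_iota. Qed.

Lemma before_first_clean i : (i < first_clean)%N -> ~~ clean P (v i).
Proof.
move=> ij; have := before_find 0%N ij.
by rewrite nth_iota ?(leq_trans ij first_clean_le_k) // add0n => ->.
Qed.

Lemma first_clean_le j : clean P (v j) -> (first_clean <= j)%N.
Proof. by move=> cj; rewrite leqNgt; apply: contraL cj; apply: before_first_clean. Qed.

Lemma first_clean_lower_left : inC 2 t (v 0) && below (v 0) ->
  inC 2 t (v first_clean) && below (v first_clean).
Proof.
move=> ll0.
suff lower_left n : (n <= first_clean)%N -> inC 2 t (v n) && below (v n).
  exact: lower_left.
elim: n => // n IH nj.
have nk : (n < k)%N by apply: leq_trans nj first_clean_le_k.
rewrite path_next_vertex //; apply: sweep_keeps_lower_left; last exact: IH (ltnW nj).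
  by apply: path_in_P; apply: ltnW.
exact: before_first_clean.
Qed.

Lemma path_clean_sum_le : inC 2 t (v 0) && below (v 0) ->
  \sum_(j < k | clean P (v j)) L1 (bar (v j)) (bar (v j.+1))
    <= 4 * L1 (vproj (v first_clean)) t.
Proof.
move/first_clean_lower_left; rewrite /inC /below /=.
set rr := - (v first_clean).1 => ll.
have rr0 : 0 <= rr by rewrite /rr; lra.
have square j : (j < k)%N -> clean P (v j) -> in_square rr (v j).
  move=> jk cj; apply: (@path_in_square first_clean).
    by rewrite (ltnW jk) andbT first_clean_le.
  by rewrite /in_square /rr; lra.
have -> : 4 * L1 (vproj (v first_clean)) t = 4%:R * (2 * rr).
  by rewrite /L1 /vproj /= !subr0 normrN ler0_norm /rr; lra.
rewrite (partition_big (fun j : 'I_k => (below (v j), inC 0 (v j) t)) predT) //=.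
have class c : \sum_(j < k | clean P (v j) && ((below (v j), inC 0 (v j) t) == c))
    L1 (bar (v j)) (bar (v j.+1)) <= 2 * rr.
  apply: (clean_class_sum_le
    (Q := fun j => clean P (v j) && ((below (v j), inC 0 (v j) t) == c))) => //.
    by move=> j jk /andP[cj _]; rewrite cj square.
  move=> i j ijk /andP[_ /eqP <-] /andP[_ /eqP].
  by case=> -> e; split=> //; rewrite /greedy_cone /inC /= e.
apply: le_trans (ler_sum _ (fun c _ => class c)) _.
by rewrite sumr_const card_prod card_bool -(mulr_natr (2 * rr)); lra.
Qed.

End Path.

End Routing.

Theorem corollary2 (R : realFieldType) (P : seq (R * R)) (s t : R * R)
    (nb : R * R -> nat -> R * R) (k : nat) (v : nat -> R * R) :
  s \in P -> t \in P -> t = (0, 0) ->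
  s.1 <= 0 -> 0 <= s.2 -> s.1 + s.2 < 0 ->
  theta4_graph P nb ->
  v 0%N = s -> v k = t ->
  (forall j, (j < k)%N -> v j != t) ->
  (forall j, (j < k)%N -> alg_step P nb t (v j) (v j.+1)) ->
  let p1 := v (find (fun j => clean P (v j)) (iota 0 k)) in
  \sum_(j < k | clean P (v j)) L1 (bar (v j)) (bar (v j.+1))
    <= 4 * L1 (vproj p1) t.
Proof.
move=> sP tP tE s1 s2 s3 graphP v0 vk v_neq_t v_step; subst t s; cbv zeta.
apply: (path_clean_sum_le (nb := nb)) => //; rewrite /inC /below /=; lra.
Qed.
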